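(* Let $S$ be an idempotent semiring. The following are equivalent: (1) $\mathcal{R}^{\bullet}$ is the least distributive lattice congruence on $S$; (2) $\mathcal{D}^{+}\subseteq\mathcal{R}^{\bullet}$ and $S$ satisfies $x+yx+x\approx x$; (3) $S$ satisfies $x+xyx+x\approx x$ and $\mathcal{L}^{\bullet}\subseteq\mathcal{D}^{+}\subseteq\mathcal{R}^{\bullet}$; (4) $\leq^{r}_{\cdot}\ \subseteq\ \leq_{+}$ on $S$; (5) $S$ satisfies the identity $x\approx yx+x+yx$; (6) $S$ satisfies the identity $x\approx (y+x+y)x$.
   Context: An idempotent semiring is an algebra $(S,+,\cdot)$ with two binary operations such that $(S,+)$ and $(S,\cdot)$ are bands (associative, with $x+x=x$ and $xx=x$), and both distributive laws $x(y+z)=xy+xz$ and $(x+y)z=xz+yz$ hold; addition is not assumed commutative. A distributive lattice congruence on $S$ is a congruence $\rho$ such that $S/\rho$ satisfies $x+y\approx y+x$, $xy\approx yx$ and $x+xy\approx x$. Green's relations: $a\,\mathcal{L}^{\bullet}\,b$ iff $ab=a$ and $ba=b$; $a\,\mathcal{R}^{\bullet}\,b$ iff $ab=b$ and $ba=a$; $a\,\mathcal{D}^{+}\,b$ iff $a+b+a=a$ and $b+a+b=b$. Orders: $a\leq^{r}_{\cdot} b$ iff $a=ab$; $a\leq_{+} b$ iff $b=a+b$ and $b=b+a$. *)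

Section Defs.
Context {S : Type} (add mul : S -> S -> S).

(* (S,+) and (S,.) are bands; both distributive laws hold.
   Addition is NOT assumed commutative. *)
Record idem_semiring : Prop := {
  add_assoc : forall x y z, add x (add y z) = add (add x y) z;
  add_idem  : forall x, add x x = x;
  mul_assoc : forall x y z, mul x (mul y z) = mul (mul x y) z;
  mul_idem  : forall x, mul x x = x;
  mul_add_l : forall x y z, mul x (add y z) = add (mul x y) (mul x z);
  mul_add_r : forall x y z, mul (add x y) z = add (mul x z) (mul y z)
}.

Definition rel_incl (R R' : S -> S -> Prop) : Prop :=
  forall a b, R a b -> R' a b.

Definition congruence (rho : S -> S -> Prop) : Prop :=
  (forall a, rho a a) /\
  (forall a b, rho a b -> rho b a) /\
  (forall a b c, rho a b -> rho b c -> rho a c) /\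
  (forall a b c d, rho a b -> rho c d -> rho (add a c) (add b d)) /\
  (forall a b c d, rho a b -> rho c d -> rho (mul a c) (mul b d)).

Definition dl_congruence (rho : S -> S -> Prop) : Prop :=
  congruence rho /\
  (forall x y, rho (add x y) (add y x)) /\
  (forall x y, rho (mul x y) (mul y x)) /\
  (forall x y, rho (add x (mul x y)) x).

Definition least_dl_congruence (rho : S -> S -> Prop) : Prop :=
  dl_congruence rho /\
  forall sigma, dl_congruence sigma -> rel_incl rho sigma.

Definition Lmul (a b : S) : Prop := mul a b = a /\ mul b a = b.
Definition Rmul (a b : S) : Prop := mul a b = b /\ mul b a = a.
Definition Dadd (a b : S) : Prop := add (add a b) a = a /\ add (add b a) b = b.

Definition le_r_mul (a b : S) : Prop := a = mul a b.
Definition le_add (a b : S) : Prop := b = add a b /\ b = add b a.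

End Defs.

(* All six conditions are equivalent to the single requirement that every
   left multiple [y x] lies below [x] in the additive order, i.e.
   [y x + x = x = x + y x].  Applied to [x y x = (x y)(y x)] and
   [y x = y (x y x)], it forces the multiplicative reduct to be a right
   regular band ([x y x = y x]); together these two identities make R-dot
   a congruence whose quotient is a distributive lattice.  It is the least
   one because any congruence making multiplication commutative identifies
   [b a] with [a b], which for R-dot related [a], [b] are [a] and [b]. *)

From Stdlib Require Import Setoid.

Section IdempotentSemiring.

Variable S : Type.
Variables add mul : S -> S -> S.
Hypothesis HS : idem_semiring add mul.

Local Infix "+" := add.
Local Infix "*" := mul.

Let addA := add_assoc _ _ HS.
Let addxx := add_idem _ _ HS.
Let mulA := mul_assoc _ _ HS.
Let mulxx := mul_idem _ _ HS.
Let mulDr := mul_add_l _ _ HS.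
Let mulDl := mul_add_r _ _ HS.

Definition left_multiples_le_add : Prop :=
  forall x y : S, le_add add (y * x) x.

Definition right_regular : Prop := forall x y : S, x * y * x = y * x.

Lemma le_add_antisym (a b : S) : le_add add a b -> le_add add b a -> a = b.
Proof.
  intros [Eb _] [_ Ea].
  transitivity (a + b); [exact Ea | symmetry; exact Eb].
Qed.

Lemma le_add_iff_sandwich (a b : S) : le_add add a b <-> b = a + b + a.
Proof.
  split.
  - intros [Eab Eba]. rewrite <- Eab. exact Eba.
  - intros E. split.
    + rewrite E at 2. rewrite !addA, addxx. exact E.
    + rewrite E at 2. rewrite <- !addA, addxx, addA. exact E.
Qed.

Lemma le_r_mul_mulL (x y : S) : le_r_mul mul (y * x) x.
Proof. unfold le_r_mul. rewrite <- mulA, mulxx. reflexivity. Qed.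

Lemma le_r_mul_sub_le_add_iff :
  rel_incl (le_r_mul mul) (le_add add) <-> left_multiples_le_add.
Proof.
  split.
  - intros h x y. apply h, le_r_mul_mulL.
  - intros h a b Eab. unfold le_r_mul in Eab. rewrite Eab. apply h.
Qed.

Lemma sandwich_add_iff :
  (forall x y : S, x = y * x + x + y * x) <-> left_multiples_le_add.
Proof.
  split; intros h x y; apply le_add_iff_sandwich, h.
Qed.

Lemma sandwich_mul_iff :
  (forall x y : S, x = (y + x + y) * x) <-> left_multiples_le_add.
Proof.
  rewrite <- sandwich_add_iff.
  split; intros h x y; rewrite (h x y) at 1; rewrite !mulDl, mulxx; reflexivity.
Qed.

Lemma right_regular_of_le_add : left_multiples_le_add -> right_regular.
Proof.
  intros h x y. apply le_add_antisym.
  - assert (E : x * y * x = (x * y) * (y * x)).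
    { rewrite mulA, <- (mulA x y y), mulxx. reflexivity. }
    rewrite E. apply h.
  - assert (E : y * x = y * (x * y * x)).
    { rewrite !mulA, <- (mulA (y * x) y x), mulxx. reflexivity. }
    rewrite E at 1. apply h.
Qed.

Lemma Lmul_eq (rr : right_regular) (a b : S) : Lmul mul a b -> a = b.
Proof.
  intros [Eab Eba].
  rewrite <- Eba, <- (rr a b), Eab, mulxx. reflexivity.
Qed.

Section LeftMultiplesBelow.

Hypothesis below : left_multiples_le_add.

Let rr : right_regular := right_regular_of_le_add below.

Lemma add_mul_add_swap (a b : S) : (a + b) * (b + a) = b + a.
Proof.
  rewrite mulDr, !mulDl, !mulxx.
  destruct (below b a) as [Eb _]; destruct (below a b) as [_ Ea].
  rewrite <- Eb, <- Ea. reflexivity.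
Qed.

Lemma mul_mul_swap (a b : S) : (a * b) * (b * a) = b * a.
Proof. rewrite <- mulA, (mulA b b a), mulxx, mulA. apply rr. Qed.

Lemma Rmul_add_compat_half (a b c d : S) :
  a * b = b -> c * d = d -> (a + c) * (b + d) = b + d.
Proof.
  intros Eab Ecd.
  rewrite mulDr, !mulDl, Eab, Ecd.
  destruct (below b c) as [_ Eb]; destruct (below d a) as [Ed _].
  rewrite <- Eb, <- Ed. reflexivity.
Qed.

Lemma Rmul_mul_compat_half (a b c d : S) :
  a * b = b -> c * d = d -> (a * c) * (b * d) = b * d.
Proof.
  intros Eab Ecd.
  (* [c b c = b c] lets the factor [c] be absorbed into [d = c d]. *)
  rewrite <- Ecd at 1.
  replace (a * c * (b * (c * d))) with (a * (c * b * c) * d)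
    by (rewrite !mulA; reflexivity).
  rewrite rr, mulA, Eab, <- mulA, Ecd. reflexivity.
Qed.

Lemma Rmul_congruence : congruence add mul (Rmul mul).
Proof.
  split; [|split; [|split; [|split]]].
  - intros a. split; apply mulxx.
  - intros a b [Eab Eba]. split; assumption.
  - intros a b c [Eab Eba] [Ebc Ecb]. split.
    + rewrite <- Ebc, mulA, Eab. reflexivity.
    + rewrite <- Eba, mulA, Ecb. reflexivity.
  - intros a b c d [Eab Eba] [Ecd Edc].
    split; apply Rmul_add_compat_half; assumption.
  - intros a b c d [Eab Eba] [Ecd Edc].
    split; apply Rmul_mul_compat_half; assumption.
Qed.

Lemma Rmul_dl_congruence : dl_congruence add mul (Rmul mul).
Proof.
  split; [exact Rmul_congruence | split; [|split]].
  - intros x y. split; apply add_mul_add_swap.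
  - intros x y. split; apply mul_mul_swap.
  - intros x y. split.
    + rewrite mulDl, rr, mulxx. symmetry. apply (below x y).
    + rewrite mulDr, mulxx, mulA, mulxx. reflexivity.
Qed.

End LeftMultiplesBelow.

Lemma dl_congruence_contains_Rmul (rho : S -> S -> Prop) :
  dl_congruence add mul rho -> rel_incl (Rmul mul) rho.
Proof.
  intros [_ [_ [hcomm _]]] a b [Eab Eba].
  specialize (hcomm b a). rewrite Eab, Eba in hcomm. exact hcomm.
Qed.

Lemma dl_congruence_contains_Dadd (rho : S -> S -> Prop) :
  dl_congruence add mul rho -> rel_incl (Dadd add) rho.
Proof.
  intros [[_ [sym [trans _]]] [hcomm _]] a b [Ea Eb].
  assert (Ha : rho a (a + b)).
  { specialize (hcomm (a + b) a). rewrite Ea, addA, addxx in hcomm. exact hcomm. }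
  assert (Hb : rho b (b + a)).
  { specialize (hcomm (b + a) b). rewrite Eb, addA, addxx in hcomm. exact hcomm. }
  apply (trans _ _ _ Ha), sym, (trans _ _ _ Hb), hcomm.
Qed.

Lemma le_add_of_Rmul_dl_congruence :
  dl_congruence add mul (Rmul mul) -> left_multiples_le_add.
Proof.
  intros [_ [hadd [hmul habs]]] x y.
  assert (rr : x * y * x = y * x).
  { destruct (hmul x y) as [E _]. rewrite <- mulA, (mulA y y), mulxx, mulA in E.
    exact E. }
  assert (Er : x + y * x = x).
  { destruct (habs x y) as [E _]. rewrite mulDl, rr, mulxx in E. exact E. }
  assert (El : y * x + x = x).
  { destruct (hadd x (y * x)) as [_ E]. rewrite Er in E.
    rewrite mulDl, <- mulA, !mulxx in E. exact E. }
  split; symmetry; assumption.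
Qed.

Lemma least_dl_congruence_Rmul_iff :
  least_dl_congruence add mul (Rmul mul) <-> left_multiples_le_add.
Proof.
  split.
  - intros [h _]. apply le_add_of_Rmul_dl_congruence, h.
  - intros h. split.
    + apply Rmul_dl_congruence, h.
    + apply dl_congruence_contains_Rmul.
Qed.

Lemma Dadd_add_r (a b : S) : a + b + a = a -> Dadd add a (a + b) /\ Dadd add (b + a) a.
Proof.
  intros E. split; split.
  - rewrite addA, addxx. exact E.
  - rewrite E, addA, addxx. reflexivity.
  - rewrite <- (addA b a a), !addxx. reflexivity.
  - rewrite addA, <- (addA (a + b) a a), addxx. exact E.
Qed.

Lemma Dadd_sub_Rmul_absorb_iff :
  rel_incl (Dadd add) (Rmul mul) /\ (forall x y : S, x + y * x + x = x)
  <-> left_multiples_le_add.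
Proof.
  split.
  - intros [hD habs] x y.
    destruct (Dadd_add_r x (y * x) (habs x y)) as [D1 D2].
    destruct (hD _ _ D1) as [_ Er]; destruct (hD _ _ D2) as [El _].
    rewrite mulDl, <- mulA, !mulxx in Er, El.
    split; symmetry; assumption.
  - intros h. split.
    + apply dl_congruence_contains_Dadd, Rmul_dl_congruence, h.
    + intros x y. destruct (h x y) as [_ Er]. rewrite <- Er. apply addxx.
Qed.

Lemma right_regular_of_Lmul_sub_Rmul :
  rel_incl (Lmul mul) (Rmul mul) -> right_regular.
Proof.
  intros h x y.
  assert (L : Lmul mul (y * x) (x * y * x)).
  { split.
    - replace (y * x * (x * y * x)) with (y * (x * x) * y * x)
        by (rewrite !mulA; reflexivity).
      rewrite mulxx.
      replace (y * x * y * x) with ((y * x) * (y * x)) by (rewrite !mulA; reflexivity).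
      apply mulxx.
    - replace (x * y * x * (y * x)) with (x * ((y * x) * (y * x)))
        by (rewrite !mulA; reflexivity).
      rewrite mulxx, mulA. reflexivity. }
  destruct (h _ _ L) as [E _]. rewrite <- E. exact (proj1 L).
Qed.

Lemma Lmul_Dadd_Rmul_iff :
  (forall x y : S, x + x * y * x + x = x) /\
  rel_incl (Lmul mul) (Dadd add) /\ rel_incl (Dadd add) (Rmul mul)
  <-> left_multiples_le_add.
Proof.
  rewrite <- Dadd_sub_Rmul_absorb_iff.
  split.
  - intros [habs [hL hD]].
    assert (rr : right_regular)
      by (apply right_regular_of_Lmul_sub_Rmul; intros a b Lab; apply hD, hL, Lab).
    split; [exact hD |]. intros x y. rewrite <- rr. apply habs.
  - intros [hD habs].
    assert (rr : right_regular)
      by (apply right_regular_of_le_add, Dadd_sub_Rmul_absorb_iff; split; assumption).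
    split; [| split; [| exact hD]].
    + intros x y. rewrite rr. apply habs.
    + intros a b Lab. rewrite <- (Lmul_eq rr a b Lab). split; rewrite !addxx; reflexivity.
Qed.

End IdempotentSemiring.

Theorem theorem3p4 (S : Type) (add mul : S -> S -> S)
  (HS : idem_semiring add mul) :
  let P1 := least_dl_congruence add mul (Rmul mul) in
  let P2 := rel_incl (Dadd add) (Rmul mul) /\
            (forall x y : S, add (add x (mul y x)) x = x) in
  let P3 := (forall x y : S, add (add x (mul (mul x y) x)) x = x) /\
            rel_incl (Lmul mul) (Dadd add) /\
            rel_incl (Dadd add) (Rmul mul) in
  let P4 := rel_incl (le_r_mul mul) (le_add add) in
  let P5 := forall x y : S, x = add (add (mul y x) x) (mul y x) in
  let P6 := forall x y : S, x = mul (add (add y x) y) x in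
  (P1 <-> P2) /\ (P1 <-> P3) /\ (P1 <-> P4) /\ (P1 <-> P5) /\ (P1 <-> P6).
Proof.
  cbv zeta.
  pose proof (least_dl_congruence_Rmul_iff S add mul HS).
  pose proof (Dadd_sub_Rmul_absorb_iff S add mul HS).
  pose proof (Lmul_Dadd_Rmul_iff S add mul HS).
  pose proof (le_r_mul_sub_le_add_iff S add mul HS).
  pose proof (sandwich_add_iff S add mul HS).
  pose proof (sandwich_mul_iff S add mul HS).
  tauto.
Qed.
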